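(* Let $\alpha\in\mathbb{N}^n$. Then $1-T_\alpha(x)$ and $1+T_\alpha(x)$ both belong to $\mathcal Q(1-x_1^2,\dots,1-x_n^2)_{2|\alpha|}$, where $|\alpha|=\sum_i\alpha_i$.
   Context: $\Sigma[x]_r$ is the cone of sums of squares of polynomials in $x=(x_1,\dots,x_n)$ of total degree at most $r$; $\mathcal Q(1-x_1^2,\dots,1-x_n^2)_r=\Sigma[x]_r+\sum_{i=1}^n(1-x_i^2)\Sigma[x]_{r-2}$. $T_k(x)=\cos(k\arccos x)$ is the Chebyshev polynomial of the first kind and $T_\alpha(x)=\prod_{i=1}^nT_{\alpha_i}(x_i)$. *)

From HB Require Import structures.
From mathcomp Require Import all_boot all_order all_algebra.
From mathcomp Require Import reals.
From mathcomp Require Import mpoly.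
Set Implicit Arguments. Unset Strict Implicit. Unset Printing Implicit Defensive.
Import Order.TTheory GRing.Theory Num.Theory.
Local Open Scope ring_scope.

Fixpoint cheb_pair (A : pzRingType) (x : A) (k : nat) : A * A :=
  match k with
  | 0%N => (1, x)
  | k'.+1 => let: (a, b) := cheb_pair x k' in (b, 2%:R * x * b - a)
  end.

Definition cheb (A : pzRingType) (x : A) (k : nat) : A := (cheb_pair x k).1.

Definition chebT (R : realType) (n : nat) (alpha : 'I_n -> nat) : {mpoly R[n]} :=
  \prod_(i < n) cheb ('X_i : {mpoly R[n]}) (alpha i).

(* total degree (msize p = 1 + deg p, msize 0 = 0) *)
Definition tdeg (R : realType) (n : nat) (p : {mpoly R[n]}) : nat := (msize p).-1.

Definition sumsq (R : realType) (n : nat) (s : seq {mpoly R[n]}) : {mpoly R[n]} :=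
  \sum_(q <- s) q ^+ 2.

(* Sigma[x]_r : sums of squares of degree at most r, i.e. sum_j q_j^2 with
   deg (q_j^2) = 2 deg q_j <= r. *)
Definition in_sos (R : realType) (n : nat) (r : nat) (p : {mpoly R[n]}) : Prop :=
  exists s : seq {mpoly R[n]},
    p = sumsq s /\ (forall q, q \in s -> (2 * tdeg q <= r)%N).

(* Q(1-x_1^2,...,1-x_n^2)_r = Sigma_r + sum_i (1 - x_i^2) Sigma_{r-2};
   Sigma_{r-2} = {0} when r < 2 (the condition 2 deg q + 2 <= r). *)
Definition in_quadmod (R : realType) (n : nat) (r : nat) (p : {mpoly R[n]}) : Prop :=
  exists (s0 : seq {mpoly R[n]}) (s : 'I_n -> seq {mpoly R[n]}),
    p = sumsq s0 + \sum_(i < n) (1 - 'X_i ^+ 2) * sumsq (s i)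
    /\ (forall q, q \in s0 -> (2 * tdeg q <= r)%N)
    /\ (forall i q, q \in s i -> (2 * tdeg q + 2 <= r)%N).

From HB Require Import structures.
From mathcomp Require Import all_boot all_order all_algebra.
From mathcomp Require Import reals.
From mathcomp Require Import mpoly.
From mathcomp Require Import ring zify.
Set Implicit Arguments. Unset Strict Implicit.
Import Order.TTheory GRing.Theory Num.Theory.
Local Open Scope ring_scope.

(* Alongside T_k carry the Chebyshev polynomial of the second kind U_(k-1); the
   Pell identity T_k^2 - (x^2 - 1) U_(k-1)^2 = 1 then says that
   1 - T_k(x)^2 = (1 - x^2) U_(k-1)(x)^2 lies in the quadratic module at
   degree 2k.  For a product this propagates through
   1 - (p q)^2 = (1 - p^2) + p^2 (1 - q^2), so 1 - T_alpha^2 lies in it at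
   degree 2|alpha|, and finally
   1 -+ T_alpha = ((1 -+ T_alpha)^2 + (1 - T_alpha^2)) / 2. *)

(* cheb_TU x k = (T_k(x), U_(k-1)(x)), with U_(-1) = 0. *)
Fixpoint cheb_TU (A : comPzRingType) (x : A) (k : nat) : A * A :=
  match k with
  | 0%N => (1, 0)
  | k'.+1 => let: (t, u) := cheb_TU x k' in (x * t + (x ^+ 2 - 1) * u, t + x * u)
  end.

Section ChebyshevPell.
Variables (A : comPzRingType) (x : A).

Lemma cheb_TUS k :
  cheb_TU x k.+1 =
    (x * (cheb_TU x k).1 + (x ^+ 2 - 1) * (cheb_TU x k).2,
     (cheb_TU x k).1 + x * (cheb_TU x k).2).
Proof. by rewrite /=; case: (cheb_TU x k). Qed.

Lemma cheb_pairE k : cheb_pair x k = ((cheb_TU x k).1, (cheb_TU x k.+1).1).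
Proof.
elim: k => [|k IH] /=; first by congr pair; ring.
by rewrite IH /=; case: (cheb_TU x k) => t u /=; congr pair; ring.
Qed.

Lemma chebE k : cheb x k = (cheb_TU x k).1.
Proof. by rewrite /cheb cheb_pairE. Qed.

Lemma cheb_TU_pell k :
  (cheb_TU x k).1 ^+ 2 - (x ^+ 2 - 1) * (cheb_TU x k).2 ^+ 2 = 1.
Proof.
elim: k => [|k IH]; first by rewrite /=; ring.
by rewrite cheb_TUS /= -[RHS]IH; ring.
Qed.

End ChebyshevPell.

Section TotalDegree.
Variables (R : realType) (n : nat).
Implicit Types (p q : {mpoly R[n]}).

Lemma tdegC (c : R) : tdeg (c%:MP : {mpoly R[n]}) = 0%N.
Proof. by rewrite /tdeg msizeC; case: (c != 0). Qed.

Lemma tdeg1 : tdeg (1 : {mpoly R[n]}) = 0%N.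
Proof. by rewrite /tdeg msize1. Qed.

Lemma tdegX (i : 'I_n) : tdeg ('X_i : {mpoly R[n]}) = 1%N.
Proof. by rewrite /tdeg msizeX mdeg1. Qed.

Lemma tdegN p : tdeg (- p) = tdeg p.
Proof. by rewrite /tdeg msizeN. Qed.

Lemma tdegD_le d p q : (tdeg p <= d)%N -> (tdeg q <= d)%N -> (tdeg (p + q) <= d)%N.
Proof. by move=> degp degq; have := msizeD_le p q; rewrite /tdeg in degp degq *; lia. Qed.

Lemma tdegM_le a b p q : (tdeg p <= a)%N -> (tdeg q <= b)%N -> (tdeg (p * q) <= a + b)%N.
Proof.
move=> degp degq; apply: leq_trans (leq_add degp degq).
have [->|nz_p] := eqVneq p 0; first by rewrite mul0r /tdeg msize0.
have [->|nz_q] := eqVneq q 0; first by rewrite mulr0 /tdeg msize0.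
have sz_p : (0 < msize p)%N by rewrite lt0n msize_poly_eq0.
have sz_q : (0 < msize q)%N by rewrite lt0n msize_poly_eq0.
rewrite /tdeg msizeM //.
by case: (msize p) sz_p => // a' _; case: (msize q) sz_q => // b' _; rewrite addSn addnS.
Qed.

Lemma tdeg_cheb_TU (x : {mpoly R[n]}) k : (tdeg x <= 1)%N ->
  (tdeg (cheb_TU x k.+1).1 <= k.+1)%N /\ (tdeg (cheb_TU x k.+1).2 <= k)%N.
Proof.
move=> degx; have degx2 : (tdeg (x ^+ 2 - 1) <= 2)%N.
  by apply: tdegD_le; [rewrite expr2; exact: (tdegM_le degx degx) | rewrite tdegN tdeg1].
elim: k => [|k [degt degu]].
  by rewrite /= !mulr0 !addr0 mulr1 tdeg1; split.
rewrite [cheb_TU x k.+2]cheb_TUS /=.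
move: degt degu; set t := (cheb_TU x k.+1).1; set u := (cheb_TU x k.+1).2 => degt degu.
split; apply: tdegD_le => //.
- exact: tdegM_le degx degt.
- by rewrite -add2n; exact: (tdegM_le degx2 degu).
- exact: tdegM_le degx degu.
Qed.

End TotalDegree.

Section QuadraticModule.
Variables (R : realType) (n : nat).
Implicit Types (p q t : {mpoly R[n]}) (s : seq {mpoly R[n]}).

Lemma sumsq_cat s1 s2 : sumsq (s1 ++ s2) = sumsq s1 + sumsq s2.
Proof. by rewrite /sumsq big_cat. Qed.

Lemma sumsq_mull t s : sumsq [seq t * q | q <- s] = t ^+ 2 * sumsq s.
Proof. by rewrite /sumsq big_map mulr_sumr; apply: eq_bigr => q _; rewrite exprMn. Qed.

Lemma sumsq1 t : sumsq [:: t] = t ^+ 2.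
Proof. by rewrite /sumsq big_seq1. Qed.

Lemma sumsq_nil : sumsq [::] = 0 :> {mpoly R[n]}.
Proof. by rewrite /sumsq big_nil. Qed.

Lemma in_quadmodW r r' p : (r <= r')%N -> in_quadmod r p -> in_quadmod r' p.
Proof.
move=> le_rr' [s0 [s [-> [deg0 degs]]]]; exists s0, s; split => //; split.
  by move=> q /deg0; lia.
by move=> i q /degs; lia.
Qed.

Lemma in_quadmodD r p q : in_quadmod r p -> in_quadmod r q -> in_quadmod r (p + q).
Proof.
move=> [s0 [s [-> [deg_s0 deg_s]]]] [t0 [t [-> [deg_t0 deg_t]]]].
exists (s0 ++ t0), (fun i => s i ++ t i); split; last split.
- rewrite sumsq_cat.
  under [X in _ = _ + X]eq_bigr => i _ do rewrite sumsq_cat mulrDr.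
  by rewrite big_split /=; ring.
- by move=> f; rewrite mem_cat => /orP [/deg_s0|/deg_t0].
- by move=> i f; rewrite mem_cat => /orP [/deg_s|/deg_t].
Qed.

Lemma in_quadmodMsqr r d t p : (tdeg t <= d)%N ->
  in_quadmod r p -> in_quadmod (r + 2 * d) (t ^+ 2 * p).
Proof.
move=> degt [s0 [s [-> [deg_s0 deg_s]]]].
exists [seq t * q | q <- s0], (fun i => [seq t * q | q <- s i]); split; last split.
- rewrite sumsq_mull mulrDr; congr (_ + _).
  by rewrite mulr_sumr; apply: eq_bigr => i _; rewrite sumsq_mull mulrCA.
- move=> _ /mapP [q /deg_s0 degq ->].
  by have := tdegM_le degt (leqnn (tdeg q)); lia.
- move=> i _ /mapP [q /deg_s degq ->].
  by have := tdegM_le degt (leqnn (tdeg q)); lia.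
Qed.

Lemma in_quadmod1 : in_quadmod 0 (1 : {mpoly R[n]}).
Proof.
exists [:: 1], (fun=> [::]); split; last split => //.
- by rewrite sumsq1 expr1n big1 ?addr0 // => i _; rewrite sumsq_nil mulr0.
- by move=> q; rewrite inE => /eqP ->; rewrite tdeg1.
Qed.

Lemma in_quadmod_sqr r d t : (tdeg t <= d)%N -> (2 * d <= r)%N ->
  in_quadmod r (t ^+ 2).
Proof.
move=> degt le_r; apply: in_quadmodW le_r _.
by rewrite -[t ^+ 2]mulr1; apply: in_quadmodMsqr degt in_quadmod1.
Qed.

Lemma in_quadmodZ r (c : R) p : 0 <= c -> in_quadmod r p -> in_quadmod r (c *: p).
Proof.
move=> c_ge0 /(in_quadmodMsqr (eq_leq (tdegC n (Num.sqrt c)))); rewrite muln0 addn0.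
by rewrite -rmorphXn /= sqr_sqrtr // mul_mpolyC.
Qed.

Lemma in_quadmod_gen (i : 'I_n) : in_quadmod 2 (1 - 'X_i ^+ 2 : {mpoly R[n]}).
Proof.
exists [::], (fun j => if j == i then [:: 1] else [::]); split; last split => //.
- rewrite sumsq_nil add0r (bigD1 i) //= eqxx sumsq1 expr1n mulr1.
  by rewrite big1 ?addr0 // => j /negbTE ->; rewrite sumsq_nil mulr0.
- by move=> j q; case: (j == i) => //; rewrite inE => /eqP ->; rewrite tdeg1.
Qed.

End QuadraticModule.

Section UnitCertificate.
Variables (R : realType) (n : nat).
Implicit Types (p q x : {mpoly R[n]}).

(* [p] has degree at most [d] and [1 - p^2] is certified in the quadratic
   module at degree [2 d]; this certifies [|p| <= 1] on the cube [-1, 1]^n. *)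
Definition unit_cert d p := (tdeg p <= d)%N /\ in_quadmod (2 * d) (1 - p ^+ 2).

Lemma unit_cert1 : unit_cert 0 1.
Proof.
split; first by rewrite tdeg1.
by rewrite expr1n subrr -(scale0r 1); apply: in_quadmodZ (lexx 0) (in_quadmod1 R n).
Qed.

Lemma unit_certN d p : unit_cert d p -> unit_cert d (- p).
Proof. by rewrite /unit_cert tdegN sqrrN. Qed.

Lemma unit_certM a b p q : unit_cert a p -> unit_cert b q -> unit_cert (a + b) (p * q).
Proof.
move=> [degp cert_p] [degq cert_q]; split; first exact: tdegM_le degp degq.
have -> : 1 - (p * q) ^+ 2 = (1 - p ^+ 2) + p ^+ 2 * (1 - q ^+ 2) by ring.
apply: in_quadmodD; first by apply: in_quadmodW cert_p; lia.
by apply: in_quadmodW (in_quadmodMsqr degp cert_q); lia.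
Qed.

Lemma unit_certX (i : 'I_n) : unit_cert 1 'X_i.
Proof. by split; [rewrite tdegX | apply: in_quadmod_gen]. Qed.

Lemma unit_cert_cheb x k : unit_cert 1 x -> unit_cert k (cheb x k).
Proof.
case: k => [_|k [degx cert_x]]; first exact: unit_cert1.
have [degt degu] := tdeg_cheb_TU k degx.
have pell := cheb_TU_pell x k.+1.
rewrite chebE; move: degt degu pell.
set t := (cheb_TU x k.+1).1; set u := (cheb_TU x k.+1).2 => degt degu pell.
split => //.
have -> : 1 - t ^+ 2 = u ^+ 2 * (1 - x ^+ 2) by rewrite -{1}pell; ring.
by apply: in_quadmodW (in_quadmodMsqr degu cert_x); lia.
Qed.

Lemma unit_cert_chebT (alpha : 'I_n -> nat) :
  unit_cert (\sum_(i < n) alpha i) (chebT R alpha).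
Proof.
apply: (big_ind2 unit_cert) => [|a p b q|i _].
- exact: unit_cert1.
- exact: unit_certM.
- exact/unit_cert_cheb/unit_certX.
Qed.

Lemma in_quadmod_1_sub d p : unit_cert d p -> in_quadmod (2 * d) (1 - p).
Proof.
move=> [degp cert_p].
have deg1p : (tdeg (1 - p) <= d)%N.
  by apply: tdegD_le; rewrite ?tdegN ?tdeg1.
have -> : 1 - p = 2^-1 *: ((1 - p) ^+ 2 + (1 - p ^+ 2)).
  have -> : (1 - p) ^+ 2 + (1 - p ^+ 2) = 2%:R * (1 - p) by ring.
  by rewrite mulr_natl -scaler_nat scalerA mulVf ?pnatr_eq0 // scale1r.
apply: in_quadmodZ; first by rewrite invr_ge0 ler0n.
exact: in_quadmodD (in_quadmod_sqr deg1p (leqnn _)) cert_p.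
Qed.

End UnitCertificate.

Theorem lemma6 (R : realType) (n : nat) (alpha : 'I_n -> nat) :
  in_quadmod (2 * \sum_(i < n) alpha i)%N (1 - chebT R alpha) /\
  in_quadmod (2 * \sum_(i < n) alpha i)%N (1 + chebT R alpha).
Proof.
have cert := unit_cert_chebT R alpha.
split; first exact: in_quadmod_1_sub cert.
by rewrite -[chebT R alpha]opprK; apply/in_quadmod_1_sub/unit_certN.
Qed.
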